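(* Let $M$ be the spacetime with metric $$ds^2=-b^2(r)\,dt^2+f_1^2(r)\,dr^2+f_2^2(r)\,(d\theta^2+\sin^2\theta\,d\phi^2),$$ where $b,f_1,f_2$ are smooth positive functions of $r$ on an open interval. Let $u_k$ be the unit timelike covector with components $u_0=-b$, $u_r=u_\theta=u_\phi=0$, and let $\chi_k$ be the unit spacelike radial covector with components $\chi_r=f_1$, $\chi_0=\chi_\theta=\chi_\phi=0$. For smooth functions $\mathsf A(r),\mathsf B(r),\mathsf C(r)$ consider the symmetric tensor $$K_{kl}=\mathsf A(r)\,u_ku_l+\mathsf B(r)\,g_{kl}+\mathsf C(r)\,\chi_k\chi_l .$$ Then $K_{kl}$ is a divergence-free conformal Killing tensor if and only if there exist constants $\kappa_1,\kappa_2,\kappa_3$ such that $$\mathsf A=\kappa_2 f_2^2-2\kappa_3 b^2,\qquad \mathsf B=\kappa_1+2\kappa_2 f_2^2+\kappa_3 b^2,\qquad \mathsf C=-\kappa_2 f_2^2 .$$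
   Context: $\nabla$ is the Levi-Civita connection of $g$. A symmetric tensor $K_{kl}$ with trace $K=K^k{}_k$ is called a conformal Killing tensor (in the convention used here) if $\nabla_jK_{kl}+\nabla_kK_{jl}+\nabla_lK_{jk}=\tfrac16\left(g_{kl}\nabla_jK+g_{jl}\nabla_kK+g_{jk}\nabla_lK\right)$, and divergence-free if $\nabla^kK_{kl}=0$. *)

From Stdlib Require Import Reals.
From Coquelicot Require Import Coquelicot.
Open Scope R_scope.

(* A point of the coordinate chart: x 0 = t, x 1 = r, x 2 = theta, x 3 = phi. *)
Definition Point := nat -> R.

Definition sum4 (F : nat -> R) : R := F 0%nat + F 1%nat + F 2%nat + F 3%nat.

Definition upd (x : Point) (i : nat) (s : R) : Point :=
  fun j => if Nat.eqb j i then s else x j.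

Definition partial (i : nat) (F : Point -> R) (x : Point) : R :=
  Derive (fun s => F (upd x i s)) (x i).

Section Geometry.
Variables b f1 f2 : R -> R.

Definition gmet (i j : nat) (x : Point) : R :=
  if Nat.eqb i j then
    match i with
    | 0%nat => - (b (x 1%nat)) ^ 2
    | 1%nat => (f1 (x 1%nat)) ^ 2
    | 2%nat => (f2 (x 1%nat)) ^ 2
    | 3%nat => (f2 (x 1%nat)) ^ 2 * (sin (x 2%nat)) ^ 2
    | _ => 0
    end
  else 0.

Definition ginv (i j : nat) (x : Point) : R :=
  if Nat.eqb i j then
    match i with
    | 0%nat => - / (b (x 1%nat)) ^ 2
    | 1%nat => / (f1 (x 1%nat)) ^ 2
    | 2%nat => / (f2 (x 1%nat)) ^ 2
    | 3%nat => / ((f2 (x 1%nat)) ^ 2 * (sin (x 2%nat)) ^ 2)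
    | _ => 0
    end
  else 0.

Definition Gam (m i j : nat) (x : Point) : R :=
  / 2 * sum4 (fun l => ginv m l x *
     (partial i (gmet j l) x + partial j (gmet i l) x - partial l (gmet i j) x)).

Definition covD (K : nat -> nat -> Point -> R) (j k l : nat) (x : Point) : R :=
  partial j (K k l) x
  - sum4 (fun m => Gam m j k x * K m l x)
  - sum4 (fun m => Gam m j l x * K k m x).

Definition trK (K : nat -> nat -> Point -> R) (x : Point) : R :=
  sum4 (fun k => sum4 (fun l => ginv k l x * K k l x)).

Definition inI (a c : Rbar) (r : R) : Prop := Rbar_lt a r /\ Rbar_lt r c.
Definition inU (a c : Rbar) (x : Point) : Prop :=
  inI a c (x 1%nat) /\ 0 < x 2%nat < PI.

Definition conformal_Killing (a c : Rbar) (K : nat -> nat -> Point -> R) : Prop :=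
  forall x, inU a c x -> forall j k l, (j < 4)%nat -> (k < 4)%nat -> (l < 4)%nat ->
    covD K j k l x + covD K k j l x + covD K l j k x =
    / 6 * (gmet k l x * partial j (trK K) x + gmet j l x * partial k (trK K) x
           + gmet j k x * partial l (trK K) x).

Definition divergence_free (a c : Rbar) (K : nat -> nat -> Point -> R) : Prop :=
  forall x, inU a c x -> forall l, (l < 4)%nat ->
    sum4 (fun k => sum4 (fun j => ginv j k x * covD K j k l x)) = 0.

Definition ucov (i : nat) (x : Point) : R :=
  if Nat.eqb i 0 then - b (x 1%nat) else 0.
Definition chicov (i : nat) (x : Point) : R :=
  if Nat.eqb i 1 then f1 (x 1%nat) else 0.

Definition Ktensor (A B C : R -> R) (k l : nat) (x : Point) : R :=
  A (x 1%nat) * ucov k x * ucov l x + B (x 1%nat) * gmet k l x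
  + C (x 1%nat) * chicov k x * chicov l x.

End Geometry.

Definition smooth_on (a c : Rbar) (f : R -> R) : Prop :=
  forall n r, inI a c r -> ex_derive_n f n r.

(* K is diagonal, K_tt = (A - B) b^2, K_rr = (B + C) f1^2, K_θθ = B f2^2,
   K_φφ = B f2^2 sin^2 θ, and its trace -A + 4B + C depends on r only.
   The (r r r), (r t t) and (r θ θ) components of the conformal Killing equation
   reduce to the ODEs  A' + 2B' + 5C' = 0,  b (A + C)' = 2 b' (A + C)  and
   f2 C' = 2 f2' C, which say that B + A/2 + 5C/2, C / f2^2 and (A + C) / b^2 are
   constant on the interval; these constants give κ1, κ2, κ3.  Conversely, for
   coefficients of that form every component of the conformal Killing equation
   and of the divergence vanishes identically, so the divergence condition is
   never needed for the forward implication. *)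

From Stdlib Require Import Reals Lra Lia.
From Coquelicot Require Import Coquelicot.
Open Scope R_scope.

(* [auto_derive] states derivatives of the unknown functions as [Derive (fun y => f y)]. *)
Ltac fold_eta_Derive :=
  repeat match goal with
  | |- context [Derive (fun y => ?f y)] => change (Derive (fun y => f y)) with (Derive f)
  end.

Definition conformal_Killing_defect (b f1 f2 : R -> R) (K : nat -> nat -> Point -> R)
    (j k l : nat) (x : Point) : R :=
  covD b f1 f2 K j k l x + covD b f1 f2 K k j l x + covD b f1 f2 K l j k x
  - / 6 * (gmet b f1 f2 k l x * partial j (trK b f1 f2 K) x
           + gmet b f1 f2 j l x * partial k (trK b f1 f2 K) x
           + gmet b f1 f2 j k x * partial l (trK b f1 f2 K) x).

Lemma conformal_Killing_defect_eq0 (a c : Rbar) (b f1 f2 : R -> R) K :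
  conformal_Killing b f1 f2 a c K <->
  forall x, inU a c x -> forall j k l, (j < 4)%nat -> (k < 4)%nat -> (l < 4)%nat ->
    conformal_Killing_defect b f1 f2 K j k l x = 0.
Proof.
split; intros H x Hx j k l Hj Hk Hl.
- apply Rminus_diag_eq, H; assumption.
- apply Rminus_diag_uniq, H; assumption.
Qed.

Definition radial_equations (b f2 A B C : R -> R) (r : R) : Prop :=
  Derive A r + 2 * Derive B r + 5 * Derive C r = 0 /\
  b r * (Derive A r + Derive C r) = 2 * Derive b r * (A r + C r) /\
  f2 r * Derive C r = 2 * Derive f2 r * C r.

Section RadialCalculus.

Variables (b f1 f2 A B C : R -> R) (x : Point).
Local Notation r := (x 1%nat).
Local Notation th := (x 2%nat).
Local Notation K := (Ktensor b f1 f2 A B C).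

Hypotheses (b_derivable : ex_derive b r) (f1_derivable : ex_derive f1 r)
  (f2_derivable : ex_derive f2 r).

Definition dgmet (i j l : nat) : R :=
  match i, j, l with
  | 1%nat, 0%nat, 0%nat => - (2 * b r * Derive b r)
  | 1%nat, 1%nat, 1%nat => 2 * f1 r * Derive f1 r
  | 1%nat, 2%nat, 2%nat => 2 * f2 r * Derive f2 r
  | 1%nat, 3%nat, 3%nat => 2 * f2 r * Derive f2 r * sin th ^ 2
  | 2%nat, 3%nat, 3%nat => f2 r ^ 2 * (2 * sin th * cos th)
  | _, _, _ => 0
  end.

Lemma partial_gmet i j l : partial i (gmet b f1 f2 j l) x = dgmet i j l.
Proof.
unfold partial, gmet, dgmet, upd.
destruct i as [|[|[|i]]]; destruct j as [|[|[|[|j]]]]; destruct l as [|[|[|[|l]]]];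
  cbn [Nat.eqb]; try destruct (Nat.eqb j l).
all: apply is_derive_unique; auto_derive; [repeat split; auto | fold_eta_Derive; ring].
Qed.

Hypotheses (A_derivable : ex_derive A r) (B_derivable : ex_derive B r)
  (C_derivable : ex_derive C r).

Definition dKtensor (i k l : nat) : R :=
  match i, k, l with
  | 1%nat, 0%nat, 0%nat =>
      Derive A r * b r ^ 2 + A r * (2 * b r * Derive b r)
      - (Derive B r * b r ^ 2 + B r * (2 * b r * Derive b r))
  | 1%nat, 1%nat, 1%nat =>
      (Derive B r + Derive C r) * f1 r ^ 2 + (B r + C r) * (2 * f1 r * Derive f1 r)
  | 1%nat, 2%nat, 2%nat => Derive B r * f2 r ^ 2 + B r * (2 * f2 r * Derive f2 r)
  | 1%nat, 3%nat, 3%nat =>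
      (Derive B r * f2 r ^ 2 + B r * (2 * f2 r * Derive f2 r)) * sin th ^ 2
  | 2%nat, 3%nat, 3%nat => B r * f2 r ^ 2 * (2 * sin th * cos th)
  | _, _, _ => 0
  end.

Lemma partial_Ktensor i k l : partial i (K k l) x = dKtensor i k l.
Proof.
unfold partial, Ktensor, ucov, chicov, gmet, dKtensor, upd.
destruct i as [|[|[|i]]]; destruct k as [|[|[|[|k]]]]; destruct l as [|[|[|[|l]]]];
  cbn [Nat.eqb]; try destruct (Nat.eqb k l).
all: apply is_derive_unique; auto_derive; [repeat split; auto | fold_eta_Derive; ring].
Qed.

Hypotheses (b_neq0 : b r <> 0) (f1_neq0 : f1 r <> 0) (f2_neq0 : f2 r <> 0)
  (sin_neq0 : sin th <> 0).

Definition dtrK (j : nat) : R :=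
  match j with
  | 1%nat => - Derive A r + 4 * Derive B r + Derive C r
  | _ => 0
  end.

Lemma partial_trK j : partial j (trK b f1 f2 K) x = dtrK j.
Proof.
unfold partial, trK, sum4, Ktensor, ucov, chicov, gmet, ginv, dtrK, upd.
destruct j as [|[|[|j]]]; cbn [Nat.eqb].
all: apply is_derive_unique; auto_derive;
  [repeat split; auto; repeat apply Rmult_integral_contrapositive_currified; auto
  | fold_eta_Derive; field; auto].
Qed.

Local Ltac expand_defect :=
  unfold conformal_Killing_defect, covD, Gam, sum4;
  rewrite ?partial_trK, ?partial_Ktensor, ?partial_gmet;
  unfold dgmet, dKtensor, dtrK, Ktensor, gmet, ginv, ucov, chicov; cbn [Nat.eqb].

Lemma conformal_Killing_defect_rrr :
  conformal_Killing_defect b f1 f2 K 1 1 1 x =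
  f1 r ^ 2 / 2 * (Derive A r + 2 * Derive B r + 5 * Derive C r).
Proof. expand_defect; field; auto. Qed.

Lemma conformal_Killing_defect_rtt :
  conformal_Killing_defect b f1 f2 K 1 0 0 x =
  b r * (b r * (Derive A r + Derive C r) - 2 * Derive b r * (A r + C r))
  - b r ^ 2 / 6 * (Derive A r + 2 * Derive B r + 5 * Derive C r).
Proof. expand_defect; field; auto. Qed.

Lemma conformal_Killing_defect_rthth :
  conformal_Killing_defect b f1 f2 K 1 2 2 x =
  - f2 r * (f2 r * Derive C r - 2 * Derive f2 r * C r)
  + f2 r ^ 2 / 6 * (Derive A r + 2 * Derive B r + 5 * Derive C r).
Proof. expand_defect; field; auto. Qed.

Lemma radial_equations_of_defects :
  conformal_Killing_defect b f1 f2 K 1 1 1 x = 0 ->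
  conformal_Killing_defect b f1 f2 K 1 0 0 x = 0 ->
  conformal_Killing_defect b f1 f2 K 1 2 2 x = 0 ->
  radial_equations b f2 A B C r.
Proof.
rewrite conformal_Killing_defect_rrr, conformal_Killing_defect_rtt,
  conformal_Killing_defect_rthth.
intros Hrrr Htt Hthth.
assert (E : Derive A r + 2 * Derive B r + 5 * Derive C r = 0).
{ apply (Rmult_eq_reg_l (f1 r ^ 2 / 2)); [lra|].
  apply Rmult_integral_contrapositive_currified;
    [apply pow_nonzero; exact f1_neq0 | apply Rinv_neq_0_compat; lra]. }
rewrite E in Htt, Hthth.
split; [exact E | split].
- apply Rminus_diag_uniq, (Rmult_eq_reg_l (b r)); [lra | exact b_neq0].
- apply Rminus_diag_uniq, (Rmult_eq_reg_l (f2 r)); [lra | exact f2_neq0].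
Qed.

Section CoefficientForms.

Variables k1 k2 k3 : R.
Hypotheses
  (A_eq : A r = k2 * f2 r ^ 2 - 2 * k3 * b r ^ 2)
  (B_eq : B r = k1 + 2 * k2 * f2 r ^ 2 + k3 * b r ^ 2)
  (C_eq : C r = - k2 * f2 r ^ 2)
  (DA_eq : Derive A r = k2 * (2 * f2 r * Derive f2 r) - 2 * k3 * (2 * b r * Derive b r))
  (DB_eq : Derive B r = 2 * k2 * (2 * f2 r * Derive f2 r) + k3 * (2 * b r * Derive b r))
  (DC_eq : Derive C r = - k2 * (2 * f2 r * Derive f2 r)).

Local Ltac substitute_coefficients := rewrite ?A_eq, ?B_eq, ?C_eq, ?DA_eq, ?DB_eq, ?DC_eq.

Lemma conformal_Killing_defect_Ktensor j k l :
  (j < 4)%nat -> (k < 4)%nat -> (l < 4)%nat ->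
  conformal_Killing_defect b f1 f2 K j k l x = 0.
Proof.
intros Hj Hk Hl; expand_defect.
destruct j as [|[|[|[|j]]]]; try lia; destruct k as [|[|[|[|k]]]]; try lia;
  destruct l as [|[|[|[|l]]]]; try lia; cbn; substitute_coefficients.
all: field; auto.
Qed.

Lemma divergence_Ktensor l : (l < 4)%nat ->
  sum4 (fun k => sum4 (fun j => ginv b f1 f2 j k x * covD b f1 f2 K j k l x)) = 0.
Proof.
intros Hl; unfold covD, Gam, sum4.
rewrite ?partial_Ktensor, ?partial_gmet.
unfold dgmet, dKtensor, Ktensor, gmet, ginv, ucov, chicov; cbn [Nat.eqb].
destruct l as [|[|[|[|l]]]]; try lia; cbn; substitute_coefficients.
all: field; auto.
Qed.

End CoefficientForms.

End RadialCalculus.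

Definition kappa1 (A B C : R -> R) (r : R) : R := B r + A r / 2 + 5 * C r / 2.
Definition kappa2 (f2 C : R -> R) (r : R) : R := - C r / f2 r ^ 2.
Definition kappa3 (b A C : R -> R) (r : R) : R := - (A r + C r) / (2 * b r ^ 2).

Lemma Ktensor_coefficients_kappa (b f2 A B C : R -> R) (r : R) :
  b r <> 0 -> f2 r <> 0 ->
  A r = kappa2 f2 C r * f2 r ^ 2 - 2 * kappa3 b A C r * b r ^ 2 /\
  B r = kappa1 A B C r + 2 * kappa2 f2 C r * f2 r ^ 2 + kappa3 b A C r * b r ^ 2 /\
  C r = - kappa2 f2 C r * f2 r ^ 2.
Proof. intros Hb Hf2; unfold kappa1, kappa2, kappa3; repeat split; field; auto. Qed.

Lemma is_derive_kappa (b f2 A B C : R -> R) (r : R) :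
  ex_derive b r -> ex_derive f2 r ->
  ex_derive A r -> ex_derive B r -> ex_derive C r ->
  b r <> 0 -> f2 r <> 0 -> radial_equations b f2 A B C r ->
  is_derive (kappa1 A B C) r 0 /\ is_derive (kappa2 f2 C) r 0 /\
  is_derive (kappa3 b A C) r 0.
Proof.
intros Db Df2 DA DB DC Hb Hf2 (E1 & E2 & E3); unfold kappa1, kappa2, kappa3.
split; [|split]; auto_derive;
  try (repeat split; auto; repeat apply Rmult_integral_contrapositive_currified; auto; lra);
  fold_eta_Derive.
- lra.
- assert (DC' : Derive C r = 2 * Derive f2 r * C r / f2 r).
  { apply (Rmult_eq_reg_l (f2 r)); [rewrite E3; field|]; exact Hf2. }
  rewrite DC'; field; auto.
- assert (DA' : Derive A r = 2 * Derive b r * (A r + C r) / b r - Derive C r).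
  { apply (Rmult_eq_reg_l (b r)); [rewrite <- E2; field|]; exact Hb. }
  rewrite DA'; field; auto.
Qed.

Section Interval.

Variables a c : Rbar.

Lemma inI_nonempty : Rbar_lt a c -> exists r, inI a c r.
Proof.
unfold inI; destruct a as [a'| |], c as [c'| |]; simpl; intros H; try contradiction.
- exists ((a' + c') / 2); lra.
- exists (a' + 1); lra.
- exists (c' - 1); lra.
- exists 0; auto.
Qed.

Lemma inI_locally r : inI a c r -> locally r (inI a c).
Proof. exact (open_and _ _ (open_Rbar_gt a) (open_Rbar_lt c) r). Qed.

Lemma inI_between r s t :
  inI a c r -> inI a c s -> Rmin r s <= t <= Rmax r s -> inI a c t.
Proof.
unfold inI; intros [Har Hrc] [Has Hsc] [Ht1 Ht2]; split.
- destruct a as [a'| |]; simpl in *; auto.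
  apply Rlt_le_trans with (Rmin r s); auto; apply Rmin_glb_lt; auto.
- destruct c as [c'| |]; simpl in *; auto.
  apply Rle_lt_trans with (Rmax r s); auto; apply Rmax_lub_lt; auto.
Qed.

Lemma is_derive_0_const (g : R -> R) :
  (forall r, inI a c r -> is_derive g r 0) ->
  forall r s, inI a c r -> inI a c s -> g r = g s.
Proof.
intros Hg r s Hr Hs.
assert (Hbetween : forall t, Rmin s r <= t <= Rmax s r -> is_derive g t 0)
  by (intros t Ht; apply Hg, (inI_between s r); auto).
destruct (MVT_gen g s r (fun _ => 0)) as [z [_ E]].
- intros t Ht; apply Hbetween; lra.
- intros t Ht; apply continuity_pt_filterlim, (ex_derive_continuous g t).
  exists 0; apply Hbetween; exact Ht.
- lra.
Qed.

Lemma smooth_on_ex_derive f r : smooth_on a c f -> inI a c r -> ex_derive f r.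
Proof. intros Hf; exact (Hf 1%nat r). Qed.

End Interval.

Section OnInterval.

Variables (a c : Rbar) (b f1 f2 A B C : R -> R).
Hypotheses (Hb : smooth_on a c b) (Hf1 : smooth_on a c f1) (Hf2 : smooth_on a c f2)
  (HA : smooth_on a c A) (HB : smooth_on a c B) (HC : smooth_on a c C)
  (Hpos : forall r, inI a c r -> 0 < b r /\ 0 < f1 r /\ 0 < f2 r).

Local Ltac regularity Hr :=
  first
  [ eapply smooth_on_ex_derive; eassumption
  | destruct (Hpos _ Hr) as (? & ? & ?); apply Rgt_not_eq; assumption ].

Definition equatorial_point (r : R) : Point :=
  fun i => match i with 1%nat => r | 2%nat => PI / 2 | _ => 0 end.

Lemma radial_equations_of_conformal_Killing :
  conformal_Killing b f1 f2 a c (Ktensor b f1 f2 A B C) ->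
  forall r, inI a c r -> radial_equations b f2 A B C r.
Proof.
rewrite conformal_Killing_defect_eq0; intros HCK r Hr.
assert (Hx : inU a c (equatorial_point r)).
{ split; [exact Hr|]; simpl; pose proof PI_RGT_0; lra. }
apply (radial_equations_of_defects b f1 f2 A B C (equatorial_point r));
  try (simpl; regularity Hr);
  try (apply HCK; [exact Hx | lia ..]).
simpl; rewrite sin_PI2; exact R1_neq_R0.
Qed.

Lemma coefficients_of_radial_equations :
  Rbar_lt a c -> (forall r, inI a c r -> radial_equations b f2 A B C r) ->
  exists k1 k2 k3 : R, forall r, inI a c r ->
    A r = k2 * (f2 r) ^ 2 - 2 * k3 * (b r) ^ 2 /\
    B r = k1 + 2 * k2 * (f2 r) ^ 2 + k3 * (b r) ^ 2 /\
    C r = - k2 * (f2 r) ^ 2.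
Proof.
intros Hac Hrad; destruct (inI_nonempty a c Hac) as [r0 Hr0].
assert (Hkappa : forall r, inI a c r ->
  is_derive (kappa1 A B C) r 0 /\ is_derive (kappa2 f2 C) r 0 /\
  is_derive (kappa3 b A C) r 0)
  by (intros r Hr; apply is_derive_kappa; try regularity Hr; auto).
exists (kappa1 A B C r0), (kappa2 f2 C r0), (kappa3 b A C r0); intros r Hr.
rewrite <- (is_derive_0_const a c (kappa1 A B C)) with (r := r),
  <- (is_derive_0_const a c (kappa2 f2 C)) with (r := r),
  <- (is_derive_0_const a c (kappa3 b A C)) with (r := r);
  try (intros; apply Hkappa; assumption); try assumption.
apply Ktensor_coefficients_kappa; regularity Hr.
Qed.

Section Coefficients.

Variables k1 k2 k3 : R.
Hypothesis Hcoef : forall r, inI a c r ->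
  A r = k2 * (f2 r) ^ 2 - 2 * k3 * (b r) ^ 2 /\
  B r = k1 + 2 * k2 * (f2 r) ^ 2 + k3 * (b r) ^ 2 /\
  C r = - k2 * (f2 r) ^ 2.

Lemma Derive_coefficients r : inI a c r ->
  Derive A r = k2 * (2 * f2 r * Derive f2 r) - 2 * k3 * (2 * b r * Derive b r) /\
  Derive B r = 2 * k2 * (2 * f2 r * Derive f2 r) + k3 * (2 * b r * Derive b r) /\
  Derive C r = - k2 * (2 * f2 r * Derive f2 r).
Proof.
intros Hr.
assert (Db : ex_derive b r) by regularity Hr.
assert (Df2 : ex_derive f2 r) by regularity Hr.
assert (Hloc : forall F G : R -> R, (forall s, inI a c s -> F s = G s) ->
  Derive F r = Derive G r).
{ intros F G HFG; apply Derive_ext_loc.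
  apply (filter_imp (inI a c)); [exact HFG | exact (inI_locally a c r Hr)]. }
rewrite (Hloc A (fun s => k2 * f2 s ^ 2 - 2 * k3 * b s ^ 2)),
  (Hloc B (fun s => k1 + 2 * k2 * f2 s ^ 2 + k3 * b s ^ 2)),
  (Hloc C (fun s => - k2 * f2 s ^ 2)) by (intros s Hs; apply Hcoef, Hs).
repeat split; apply is_derive_unique; auto_derive; auto; fold_eta_Derive; ring.
Qed.

Lemma Ktensor_of_coefficients :
  conformal_Killing b f1 f2 a c (Ktensor b f1 f2 A B C) /\
  divergence_free b f1 f2 a c (Ktensor b f1 f2 A B C).
Proof.
rewrite conformal_Killing_defect_eq0.
split; intros x [Hr Hth];
  destruct (Hcoef _ Hr) as (eA & eB & eC);
  destruct (Derive_coefficients _ Hr) as (dA & dB & dC).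
- apply (conformal_Killing_defect_Ktensor b f1 f2 A B C x) with k1 k2 k3;
    try regularity Hr; try assumption.
  apply Rgt_not_eq, sin_gt_0; apply Hth.
- apply (divergence_Ktensor b f1 f2 A B C x) with k1 k2 k3;
    try regularity Hr; try assumption.
  apply Rgt_not_eq, sin_gt_0; apply Hth.
Qed.

End Coefficients.

End OnInterval.

Theorem theorem1 (a c : Rbar) (b f1 f2 A B C : R -> R)
  (Hac : Rbar_lt a c)
  (Hb : smooth_on a c b) (Hf1 : smooth_on a c f1) (Hf2 : smooth_on a c f2)
  (HA : smooth_on a c A) (HB : smooth_on a c B) (HC : smooth_on a c C)
  (Hpos : forall r, inI a c r -> 0 < b r /\ 0 < f1 r /\ 0 < f2 r) :
  (conformal_Killing b f1 f2 a c (Ktensor b f1 f2 A B C) /\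
   divergence_free b f1 f2 a c (Ktensor b f1 f2 A B C))
  <->
  exists k1 k2 k3 : R, forall r, inI a c r ->
    A r = k2 * (f2 r) ^ 2 - 2 * k3 * (b r) ^ 2 /\
    B r = k1 + 2 * k2 * (f2 r) ^ 2 + k3 * (b r) ^ 2 /\
    C r = - k2 * (f2 r) ^ 2.
Proof.
split.
- intros [HCK _].
  apply (coefficients_of_radial_equations a c b f1 f2 A B C); auto.
  apply (radial_equations_of_conformal_Killing a c b f1 f2 A B C); auto.
- intros (k1 & k2 & k3 & Hcoef).
  apply (Ktensor_of_coefficients a c b f1 f2 A B C) with k1 k2 k3; auto.
Qed.
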